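(* If $K$ is a separably determined compact line and $L$ is a closed subset of $K$, then $L$ (with the induced order) is a separably determined compact line.
   Context: A compact line is a totally ordered set which is compact in its order topology. For a compact line $H$, $H^+$ is the set of right-isolated points ($\max H$ or points with an immediate successor in $H$). $\mathrm{NBV}(K)$ is the space of right-continuous real maps of bounded variation on $K$, identified with $C(K)^*$ via $F_\mu(t)=\mu([\min K,t])$. $\lim_{i\in I}a_i=0$ means $\{i:|a_i|\ge\varepsilon\}$ is finite for every $\varepsilon>0$; $c_0(I)$ is the set of such families. $(F_i)_{i\in I}$ is weak*-null if $\lim_i\int f\,d\mu_i=0$ for all $f\in C(K)$. $(F_i)$ is of type $c_0\ell_1$ over $Q$ if $F_i(t)=a_{i,t}+b_{i,t}$ with $\lim_ia_{i,t}=0$ for each $t\in Q$ and $\sup_i\sum_{t\in Q}|b_{i,t}|<\infty$. A compact line $K$ is separably determined if for every weak*-null family $(F_i)_{i\in I}$ in $\mathrm{NBV}(K)$ and every $Q\subseteq K$: whenever $\{t\in Q\cap(H\setminus H^+):(F_i(t))_{i\in I}\notin c_0(I)\}$ is countable for every closed separable $H\subseteq K$, the family is of type $c_0\ell_1$ over $Q$. *)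

From Stdlib Require Import Reals List.
Import ListNotations.
Open Scope R_scope.

Set Implicit Arguments.

Section Defs.
Variables (T : Type) (le : T -> T -> Prop).

Definition lt (x y : T) : Prop := le x y /\ x <> y.

Definition total_order : Prop :=
  (forall x, le x x) /\
  (forall x y, le x y -> le y x -> x = y) /\
  (forall x y z, le x y -> le y z -> le x z) /\
  (forall x y, le x y \/ le y x).

Definition is_least (x : T) : Prop := forall y, le x y.
Definition is_greatest (x : T) : Prop := forall y, le y x.

(** Open sets of the order topology: every point has a basic order
    neighbourhood (a,b), [min,b), (a,max] or the whole space inside U. *)
Definition order_open (U : T -> Prop) : Prop :=
  forall x, U x ->
    (is_least x \/ exists a, lt a x /\ forall y, lt a y -> le y x -> U y) /\
    (is_greatest x \/ exists b, lt x b /\ forall y, le x y -> lt y b -> U y).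

Definition order_closed (C : T -> Prop) : Prop :=
  order_open (fun x => ~ C x).

Definition order_compact : Prop :=
  forall (J : Type) (U : J -> T -> Prop),
    (forall j, order_open (U j)) ->
    (forall x, exists j, U j x) ->
    exists s : list J, forall x, exists j, In j s /\ U j x.

Definition compact_line : Prop := total_order /\ order_compact.

Definition order_closure (D : T -> Prop) (x : T) : Prop :=
  forall U, order_open U -> U x -> exists y, D y /\ U y.

Definition countable_set (D : T -> Prop) : Prop :=
  exists g : T -> nat, forall x y, D x -> D y -> g x = g y -> x = y.

(** A subset H is separable (in the subspace topology): it has a countable
    subset whose closure contains H.  (Used for closed H.) *)
Definition separable_set (H : T -> Prop) : Prop :=
  exists D : T -> Prop, (forall x, D x -> H x) /\ countable_set D /\
    (forall x, H x -> order_closure D x).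

Definition right_isolated_in (H : T -> Prop) (t : T) : Prop :=
  H t /\
  ((forall y, H y -> le y t) \/
   (exists s, H s /\ lt t s /\ ~ (exists u, H u /\ lt t u /\ lt u s))).

Definition order_continuous (f : T -> R) : Prop :=
  forall x eps, 0 < eps ->
    exists U, order_open U /\ U x /\ forall y, U y -> Rabs (f y - f x) < eps.

Definition right_continuous (F : T -> R) : Prop :=
  forall t eps, 0 < eps ->
    is_greatest t \/
    exists b, lt t b /\ forall y, le t y -> lt y b -> Rabs (F y - F t) < eps.

Fixpoint incr_from (prev : T) (l : list T) : Prop :=
  match l with
  | [] => True
  | x :: r => lt prev x /\ incr_from x r
  end.

Fixpoint variation_from (F : T -> R) (prev : T) (l : list T) : R :=
  match l with
  | [] => 0
  | x :: r => Rabs (F x - F prev) + variation_from F x r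
  end.

Definition bounded_variation (F : T -> R) : Prop :=
  exists M, forall t0 l, incr_from t0 l -> variation_from F t0 l <= M.

Definition NBV (F : T -> R) : Prop := right_continuous F /\ bounded_variation F.

(** Tagged partitions  min = t0 < t1 < ... < tn = max,
    tags tau_k in (t_{k-1}, t_k]; represented as t0 and the list of (t_k, tau_k). *)
Fixpoint tags_ok (prev : T) (l : list (T * T)) : Prop :=
  match l with
  | [] => True
  | (t, tau) :: r => lt prev t /\ lt prev tau /\ le tau t /\ tags_ok t r
  end.

Definition tagged_partition (t0 : T) (l : list (T * T)) : Prop :=
  is_least t0 /\ tags_ok t0 l /\ is_greatest (last (t0 :: map fst l) t0).

Definition partition_points (t0 : T) (l : list (T * T)) : list T :=
  t0 :: map fst l.

Fixpoint rs_tail (f F : T -> R) (prev : T) (l : list (T * T)) : R :=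
  match l with
  | [] => 0
  | (t, tau) :: r => f tau * (F t - F prev) + rs_tail f F t r
  end.

(** Riemann-Stieltjes sum for the measure mu with F = F_mu:
    f(min) mu({min}) + sum_k f(tau_k) mu((t_{k-1}, t_k]). *)
Definition rs_sum (f F : T -> R) (t0 : T) (l : list (T * T)) : R :=
  f t0 * F t0 + rs_tail f F t0 l.

(** [v] is the integral of f w.r.t. the measure mu corresponding to F
    (limit of Riemann-Stieltjes sums along refinement of partitions). *)
Definition is_rs_integral (f F : T -> R) (v : R) : Prop :=
  forall eps, 0 < eps ->
    exists t0 l0, tagged_partition t0 l0 /\
      forall t1 l1, tagged_partition t1 l1 ->
        (forall x, In x (partition_points t0 l0) -> In x (partition_points t1 l1)) ->
        Rabs (rs_sum f F t1 l1 - v) < eps.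

End Defs.

Definition finite_set (I : Type) (P : I -> Prop) : Prop :=
  exists s : list I, forall i, P i -> In i s.

Definition c0 (I : Type) (a : I -> R) : Prop :=
  forall eps, 0 < eps -> finite_set (fun i => eps <= Rabs (a i)).

(** weak*-null family in NBV(K) = C(K)^*. *)
Definition weak_star_null (T : Type) (le : T -> T -> Prop) (I : Type)
  (F : I -> T -> R) : Prop :=
  forall f, order_continuous le f ->
    exists a : I -> R, (forall i, is_rs_integral le f (F i) (a i)) /\ c0 a.

Fixpoint sum_abs (T : Type) (g : T -> R) (l : list T) : R :=
  match l with [] => 0 | x :: r => Rabs (g x) + sum_abs g r end.

Definition type_c0l1 (T I : Type) (F : I -> T -> R) (Q : T -> Prop) : Prop :=
  exists (a b : I -> T -> R),
    (forall i t, Q t -> F i t = a i t + b i t) /\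
    (forall t, Q t -> c0 (fun i => a i t)) /\
    (exists M, forall i (l : list T), NoDup l -> (forall t, In t l -> Q t) ->
        sum_abs (b i) l <= M).

Definition separably_determined (T : Type) (le : T -> T -> Prop) : Prop :=
  forall (I : Type) (F : I -> T -> R),
    (forall i, NBV le (F i)) ->
    weak_star_null le F ->
    forall Q : T -> Prop,
      (forall H : T -> Prop, order_closed le H -> separable_set le H ->
         countable_set (fun t => Q t /\ H t /\ ~ right_isolated_in le H t /\
                                 ~ c0 (fun i => F i t))) ->
      type_c0l1 F Q.

Definition induced (T : Type) (le : T -> T -> Prop) (L : T -> Prop)
  : {x : T | L x} -> {x : T | L x} -> Prop :=
  fun x y => le (proj1_sig x) (proj1_sig y).

(* A closed subset L of a compact line K, with the induced order, carries the subspace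
   topology, hence is a compact line.  A measure on L is a measure on K concentrated on L:
   its distribution function on K is t |-> F (max (L ∩ [min K, t])), and 0 left of L.  This
   extension stays in NBV(K), and integrals against it are unchanged because a tagged
   partition of K projects onto a tagged partition of L, with tags that are close wherever
   the integrand has small oscillation.  So a weak*-null family on L extends to one on K.
   Given a closed separable H of K with countable dense D, an exceptional point t of L is
   either right-isolated in L, and then a point of D in the gap after t determines t, or a
   limit point of L, and then it is exceptional for the closure H_L in L of the first points
   of L after the points of D, which is closed and separable in L.  Separable determinacy
   of K then gives a c0-l1 decomposition over Q, which restricts to L. *)

From Stdlib Require Import Reals List FinFun Lra Lia.
From Stdlib Require Import Classical ClassicalEpsilon ProofIrrelevance FunctionalExtensionality.
Import ListNotations.
Open Scope R_scope.
Set Implicit Arguments.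
Unset Strict Implicit.

(** * Order topology of a linear order *)

Section TotalOrder.
Variables (T : Type) (le : T -> T -> Prop).
Hypothesis Htot : total_order le.

Lemma le_refl x : le x x. Proof. apply Htot. Qed.
Lemma le_antisym x y : le x y -> le y x -> x = y. Proof. apply Htot. Qed.
Lemma le_trans x y z : le x y -> le y z -> le x z. Proof. apply Htot. Qed.
Lemma le_total x y : le x y \/ le y x. Proof. apply Htot. Qed.

Lemma lt_le_incl x y : lt le x y -> le x y. Proof. now intros [? ?]. Qed.
Lemma lt_irrefl x : ~ lt le x x. Proof. intros [_ h]; auto. Qed.

Lemma lt_nle x y : lt le x y -> ~ le y x.
Proof. intros [hxy hne] hyx. apply hne, le_antisym; auto. Qed.

Lemma nle_lt x y : ~ le x y -> lt le y x.
Proof.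
  intros h. destruct (le_total x y) as [|hyx]; [tauto|].
  split; auto. intros ->. apply h, le_refl.
Qed.

Lemma le_or_lt x y : le x y \/ lt le y x.
Proof. destruct (classic (le x y)); auto using nle_lt. Qed.

Lemma lt_le_trans x y z : lt le x y -> le y z -> lt le x z.
Proof.
  intros hxy hyz. split; [eauto using le_trans, lt_le_incl|].
  intros ->. exact (lt_nle hxy hyz).
Qed.

Lemma le_lt_trans x y z : le x y -> lt le y z -> lt le x z.
Proof.
  intros hxy hyz. split; [eauto using le_trans, lt_le_incl|].
  intros ->. exact (lt_nle hyz hxy).
Qed.

Lemma lt_trans x y z : lt le x y -> lt le y z -> lt le x z.
Proof. intros hxy hyz. exact (lt_le_trans hxy (lt_le_incl hyz)). Qed.

Lemma not_greatest_lt x : ~ is_greatest le x -> exists b, lt le x b.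
Proof. intros h. apply not_all_ex_not in h as [y hy]. exists y. now apply nle_lt. Qed.

Lemma not_least_lt x : ~ is_least le x -> exists a, lt le a x.
Proof. intros h. apply not_all_ex_not in h as [y hy]. exists y. now apply nle_lt. Qed.

Lemma list_max_exists x0 (l : list T) :
  exists m, (m = x0 \/ In m l) /\ forall y, In y l -> le y m.
Proof.
  induction l as [|y l [m [hm hl]]].
  - exists x0. split; [now left|intros _ []].
  - destruct (le_total y m) as [hym|hmy].
    + exists m. split; [simpl; tauto|]. intros z [<-|hz]; auto.
    + exists y. split; [simpl; tauto|]. intros z [<-|hz]; [apply le_refl|eauto using le_trans].
Qed.

Lemma open_union V :
  (forall x, V x -> exists U, order_open le U /\ U x /\ forall y, U y -> V y) ->
  order_open le V.
Proof.
  intros h x hx. destruct (h x hx) as [U [hU [hUx hUV]]].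
  destruct (hU x hUx) as [hl hr]. split.
  - destruct hl as [hl|[a [ha hA]]]; [now left|right; exists a; auto].
  - destruct hr as [hr|[b [hb hB]]]; [now left|right; exists b; auto].
Qed.

Lemma open_ext U V : (forall x, U x <-> V x) -> order_open le U -> order_open le V.
Proof.
  intros e hU. apply open_union. intros x hx. exists U.
  split; [|split]; auto; intros; apply e; auto.
Qed.

Lemma open_gt a : order_open le (lt le a).
Proof.
  intros x hx. split; [right; exists a; split; auto|].
  destruct (classic (is_greatest le x)) as [g|g]; [now left|right].
  destruct (not_greatest_lt g) as [b hb]. exists b. split; auto.
  intros y hxy _. exact (lt_le_trans hx hxy).
Qed.

Lemma open_lt b : order_open le (fun y => lt le y b).
Proof.
  intros x hx. split; [|right; exists b; split; auto].
  destruct (classic (is_least le x)) as [g|g]; [now left|right].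
  destruct (not_least_lt g) as [a ha]. exists a. split; auto.
  intros y _ hyx. exact (le_lt_trans hyx hx).
Qed.

Lemma open_full : order_open le (fun _ => True).
Proof.
  intros x _. split.
  - destruct (classic (is_least le x)) as [g|g]; [now left|right].
    destruct (not_least_lt g) as [a ha]. exists a. split; auto.
  - destruct (classic (is_greatest le x)) as [g|g]; [now left|right].
    destruct (not_greatest_lt g) as [b hb]. exists b. split; auto.
Qed.

Lemma open_or U V : order_open le U -> order_open le V -> order_open le (fun x => U x \/ V x).
Proof.
  intros hU hV. apply open_union. intros x [hx|hx]; [exists U|exists V]; auto.
Qed.

Lemma open_and U V : order_open le U -> order_open le V -> order_open le (fun x => U x /\ V x).
Proof.
  intros hU hV x [hx hx']. destruct (hU x hx) as [hl hr]. destruct (hV x hx') as [kl kr]. split.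
  - destruct hl as [hl|[a [ha hA]]]; [now left|]. destruct kl as [kl|[a' [ha' hA']]]; [now left|right].
    destruct (le_total a a'); [exists a'|exists a]; split; auto;
      intros y hy hyx; split; (apply hA || apply hA'); eauto using le_lt_trans.
  - destruct hr as [hr|[b [hb hB]]]; [now left|]. destruct kr as [kr|[b' [hb' hB']]]; [now left|right].
    destruct (le_total b b'); [exists b|exists b']; split; auto;
      intros y hxy hy; split; (apply hB || apply hB'); eauto using lt_le_trans.
Qed.

Lemma closed_and C D : order_closed le C -> order_closed le D -> order_closed le (fun x => C x /\ D x).
Proof.
  intros hC hD. eapply open_ext; [|exact (open_or hC hD)]. intros x; simpl; tauto.
Qed.

Lemma order_closure_closed C : order_closed le (order_closure le C).
Proof.
  apply open_union. intros x hx. apply not_all_ex_not in hx as [U hU].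
  apply imply_to_and in hU as [hUopen hU]. apply imply_to_and in hU as [hUx hno].
  exists U. split; [exact hUopen|split; [exact hUx|]].
  intros y hy hcl. destruct (hcl U hUopen hy) as [z [hz hUz]]. eauto.
Qed.

Lemma closed_full : order_closed le (fun _ => True).
Proof. intros x hx. exfalso. exact (hx I). Qed.

Lemma closed_ge s : order_closed le (le s).
Proof.
  eapply open_ext; [|exact (open_lt (b := s))]. intros x. split; [|apply nle_lt].
  intros h h'. exact (lt_nle h h').
Qed.

Lemma closed_le s : order_closed le (fun y => le y s).
Proof.
  eapply open_ext; [|exact (open_gt (a := s))]. intros x. split; [|apply nle_lt].
  intros h h'. exact (lt_nle h h').
Qed.

End TotalOrder.

Definition dual (T : Type) (le : T -> T -> Prop) : T -> T -> Prop := fun x y => le y x.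

Definition left_nbhd (T : Type) (le : T -> T -> Prop) (U : T -> Prop) (x : T) : Prop :=
  is_least le x \/ exists a, lt le a x /\ forall y, lt le a y -> le y x -> U y.

Lemma lt_dual T (le : T -> T -> Prop) x y : lt (dual le) x y <-> lt le y x.
Proof. unfold lt, dual. split; intros [h n]; split; auto. Qed.

Lemma order_open_nbhds T (le : T -> T -> Prop) U :
  order_open le U <-> forall x, U x -> left_nbhd le U x /\ left_nbhd (dual le) U x.
Proof.
  split; intros h x hx; destruct (h x hx) as [hl [hr|[b [hb hB]]]];
    (split; [exact hl|]); [now left| |now left|]; right; exists b;
    (split; [now apply lt_dual|]); intros y hy hy'; apply hB; auto; now apply lt_dual.
Qed.

Lemma order_open_dual T (le : T -> T -> Prop) U : order_open le U -> order_open (dual le) U.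
Proof.
  rewrite !order_open_nbhds. intros h x hx. destruct (h x hx). split; assumption.
Qed.

Lemma order_closed_dual T (le : T -> T -> Prop) C : order_closed le C -> order_closed (dual le) C.
Proof. apply order_open_dual. Qed.

Lemma total_order_dual T (le : T -> T -> Prop) : total_order le -> total_order (dual le).
Proof.
  unfold dual. intros (hrefl & hanti & htrans & htot).
  split; [|split; [|split]]; eauto.
Qed.

Lemma order_compact_dual T (le : T -> T -> Prop) : order_compact le -> order_compact (dual le).
Proof. intros h J U hU. apply h. intros j. exact (order_open_dual (hU j)). Qed.

Section Compact.
Variables (T : Type) (le : T -> T -> Prop).
Hypotheses (Htot : total_order le) (Hcomp : order_compact le).

(* Without a maximum, K would be covered by ~C and the rays (-oo, s), s in C; the largest
   s of a finite subcover would not be covered. *)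
Lemma closed_has_max C : order_closed le C -> (exists x, C x) ->
  exists m, C m /\ forall y, C y -> le y m.
Proof.
  intros hC [x0 hx0]. apply NNPP. intros hnomax.
  assert (hup : forall x, C x -> exists s, C s /\ lt le x s).
  { intros x hx. apply NNPP. intros hn. apply hnomax. exists x. split; auto.
    intros y hy. destruct (le_or_lt Htot y x) as [|hxy]; auto. exfalso. eauto. }
  set (U := fun (j : option {s | C s}) x =>
              match j with Some s => lt le x (proj1_sig s) | None => ~ C x end).
  destruct (@Hcomp _ U) as [js hcov].
  - intros [s|]; [apply open_lt; exact Htot|exact hC].
  - intros x. destruct (classic (C x)) as [hx|hx].
    + destruct (hup x hx) as [s [hs hxs]]. now exists (Some (exist _ s hs)).
    + now exists None.
  - set (tops := flat_map (fun j => match j with Some s => [proj1_sig s] | None => [] end) js).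
    destruct (list_max_exists Htot x0 tops) as [m [hm hmax]].
    assert (hCm : C m).
    { destruct hm as [->|hm]; auto. apply in_flat_map in hm as [[[s hs]|] [_ hin]]; simpl in hin.
      - now destruct hin as [<-|[]].
      - contradiction. }
    destruct (hcov m) as [[[s hs]|] [hj hU]]; simpl in hU; [|tauto].
    apply (lt_nle Htot hU), hmax, in_flat_map. exists (Some (exist _ s hs)). simpl; auto.
Qed.

End Compact.

Lemma closed_has_min T (le : T -> T -> Prop) C :
  total_order le -> order_compact le -> order_closed le C -> (exists x, C x) ->
  exists m, C m /\ forall y, C y -> le m y.
Proof.
  intros Htot Hcomp hC. apply (closed_has_max (le := dual le)).
  - now apply total_order_dual.
  - now apply order_compact_dual.
  - now apply order_closed_dual.
Qed.

Lemma not_right_isolated_between T (le : T -> T -> Prop) (H : T -> Prop) t s :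
  total_order le -> order_compact le -> order_closed le H ->
  H t -> ~ right_isolated_in le H t -> lt le t s -> exists h, H h /\ lt le t h /\ lt le h s.
Proof.
  intros Htot Hcomp hH ht hri hts. apply NNPP. intros hno.
  assert (habove : exists h0, H h0 /\ lt le t h0).
  { apply NNPP. intros hn. apply hri. split; auto. left. intros y hy.
    destruct (le_or_lt Htot y t) as [|hty]; auto. exfalso. eauto. }
  destruct habove as [h0 [hh0 hth0]].
  assert (hbeyond : forall h, H h -> lt le t h -> le s h).
  { intros h hh hth. destruct (le_or_lt Htot s h) as [|hhs]; auto. exfalso. eauto. }
  destruct (closed_has_min Htot Hcomp (C := fun y => H y /\ le s y)) as [m [[hm hsm] hmin]].
  - apply closed_and, closed_ge; auto.
  - exists h0. auto.
  - apply hri. split; auto. right. exists m. split; auto. split; [exact (lt_le_trans Htot hts hsm)|].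
    intros [u (hu & htu & hum)]. apply (lt_nle Htot hum), hmin. auto.
Qed.

(** * Partitions and Riemann-Stieltjes sums *)

Lemma sum_abs_map A B (g : B -> R) (h : A -> B) l :
  sum_abs g (map h l) = sum_abs (fun x => g (h x)) l.
Proof. induction l as [|x l IH]; simpl; congruence. Qed.

Lemma Rabs_mul_add_sub_le a b d A B e v : Rabs (a - b) < e -> Rabs (A - B) <= e * v ->
  Rabs (a * d + A - (b * d + B)) <= e * (Rabs d + v).
Proof.
  intros hab hAB. replace (a * d + A - (b * d + B)) with ((a - b) * d + (A - B)) by ring.
  eapply Rle_trans; [apply Rabs_triang|]. rewrite Rabs_mult.
  assert (Rabs (a - b) * Rabs d <= e * Rabs d) by (apply Rmult_le_compat_r; [apply Rabs_pos|lra]).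
  lra.
Qed.

Lemma last_cons A (x : A) l d : last (x :: l) d = last l x.
Proof.
  revert x d. induction l as [|y l IH]; intros x d; [reflexivity|].
  change (last (y :: l) d = last (y :: l) x). now rewrite !IH.
Qed.

Definition diag A (l : list A) : list (A * A) := map (fun x => (x, x)) l.

Lemma map_fst_diag A (l : list A) : map fst (diag l) = l.
Proof. unfold diag. rewrite map_map. apply map_id. Qed.

Section Partitions.
Variables (T : Type) (le : T -> T -> Prop).
Hypothesis Htot : total_order le.

Lemma incr_from_gt l : forall prev, incr_from le prev l -> forall x, In x l -> lt le prev x.
Proof.
  induction l as [|t r IH]; intros prev hi x hx; [destruct hx|].
  destruct hi as [hlt hr]. destruct hx as [<-|hx]; auto.
  exact (lt_trans Htot hlt (IH _ hr _ hx)).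
Qed.

Lemma tags_ok_incr l : forall prev, tags_ok le prev l -> incr_from le prev (map fst l).
Proof. induction l as [|[t tau] r IH]; intros prev; simpl; [auto|]. intros (? & _ & _ & ?). auto. Qed.

Lemma tags_ok_diag l : forall prev, incr_from le prev l -> tags_ok le prev (diag l).
Proof.
  induction l as [|x r IH]; intros prev; simpl; [auto|].
  intros [hlt hr]. split; [exact hlt|split; [exact hlt|split; [apply (le_refl Htot)|auto]]].
Qed.

Lemma incr_from_insert l : forall t0, incr_from le t0 l -> forall p, lt le t0 p -> le p (last l t0) ->
  exists l', incr_from le t0 l' /\ (forall x, In x l -> In x l') /\ In p l' /\
    last l' t0 = last l t0.
Proof.
  induction l as [|x r IH]; intros t0 hi p hp hlast.
  - exfalso. exact (lt_nle Htot hp hlast).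
  - destruct hi as [hx hr]. rewrite last_cons in hlast. destruct (le_or_lt Htot x p) as [hxp|hpx].
    + destruct (classic (x = p)) as [<-|hne].
      * exists (x :: r). simpl. auto.
      * destruct (IH x hr p (conj hxp hne) hlast) as [r' (h1 & h2 & h3 & h4)].
        exists (x :: r'). rewrite !last_cons. simpl. intuition.
    + exists (p :: x :: r). rewrite !last_cons. simpl. intuition.
Qed.

Lemma incr_from_through m0 M0 (S : list T) : is_least le m0 -> is_greatest le M0 ->
  exists l, incr_from le m0 l /\ (forall x, In x S -> x = m0 \/ In x l) /\ last l m0 = M0.
Proof.
  intros hm hM. induction S as [|x S [l (h1 & h2 & h3)]].
  - destruct (classic (m0 = M0)) as [e|e].
    + exists []. simpl. tauto.
    + exists [M0]. simpl. split; [split; [split|]|]; auto.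
  - destruct (classic (x = m0)) as [->|hne].
    + exists l. split; auto. split; auto. intros y [<-|hy]; auto.
    + destruct (@incr_from_insert l m0 h1 x) as [l' (k1 & k2 & k3 & k4)].
      * split; auto.
      * rewrite h3. apply hM.
      * exists l'. split; auto. split; [|congruence]. intros y [<-|hy]; auto.
        destruct (h2 y hy); auto.
Qed.

Definition ray_above (ao : option T) (y : T) : Prop :=
  match ao with Some a => lt le a y | None => True end.

Definition ray_below (bo : option T) (y : T) : Prop :=
  match bo with Some b => lt le y b | None => True end.

Definition in_interval (ao bo : option T) (y : T) : Prop := ray_above ao y /\ ray_below bo y.

Lemma open_interval ao bo : order_open le (in_interval ao bo).
Proof.
  apply open_and; auto; unfold ray_above, ray_below.
  - destruct ao; [apply open_gt|apply open_full]; auto.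
  - destruct bo; [apply open_lt|apply open_full]; auto.
Qed.

Lemma open_has_interval U x : order_open le U -> U x ->
  exists ao bo, in_interval ao bo x /\ forall y, in_interval ao bo y -> U y.
Proof.
  intros hU hx. destruct (hU x hx) as [hl hr].
  assert (hleft : exists ao, ray_above ao x /\ forall y, ray_above ao y -> le y x -> U y).
  { destruct hl as [hl|[a [ha hA]]]; [exists None|exists (Some a)]; simpl; split; auto.
    intros y _ hyx. now rewrite (le_antisym Htot hyx (hl y)). }
  assert (hright : exists bo, ray_below bo x /\ forall y, ray_below bo y -> le x y -> U y).
  { destruct hr as [hr|[b [hb hB]]]; [exists None|exists (Some b)]; simpl; split; auto.
    intros y _ hxy. now rewrite (le_antisym Htot (hr y) hxy). }
  destruct hleft as [ao [hao hA]], hright as [bo [hbo hB]].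
  exists ao, bo. split; [split; auto|]. intros y [hay hyb].
  destruct (le_total Htot y x); auto.
Qed.

Definition osc_small (f : T -> R) (eps : R) (S : list T) : Prop :=
  forall a b, (forall s, In s S -> ~ (lt le a s /\ lt le s b)) ->
    forall y z, lt le a y -> le y b -> lt le a z -> le z b -> Rabs (f y - f z) < eps.

Lemma tags_ok_gt l : forall prev, tags_ok le prev l -> forall x, In x (map fst l) -> lt le prev x.
Proof. intros prev h. apply incr_from_gt, tags_ok_incr, h. Qed.

Lemma tags_cell_free S prev t (r : list (T * T)) : tags_ok le t r -> lt le prev t ->
  (forall s, In s S -> le s prev \/ In s (t :: map fst r)) ->
  forall s, In s S -> ~ (lt le prev s /\ lt le s t).
Proof.
  intros hr hlt hS s hs [hps hst]. destruct (hS s hs) as [h|[<-|h]].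
  - exact (lt_nle Htot hps h).
  - exact (lt_irrefl hst).
  - exact (lt_nle Htot hst (lt_le_incl (tags_ok_gt hr h))).
Qed.

Lemma points_after_step S prev t (r : list (T * T)) : lt le prev t ->
  (forall s, In s S -> le s prev \/ In s (t :: map fst r)) ->
  forall s, In s S -> le s t \/ In s (map fst r).
Proof.
  intros hlt hS s hs. destruct (hS s hs) as [h|[<-|h]]; auto.
  - left. exact (le_trans Htot h (lt_le_incl hlt)).
  - left. apply (le_refl Htot).
Qed.

Hypothesis Hcomp : order_compact le.

Lemma tagged_partition_through (P : list T) (x0 : T) :
  exists t0 l, tagged_partition le t0 (diag l) /\
    forall x, In x P -> In x (partition_points t0 (diag l)).
Proof.
  destruct (closed_has_min Htot Hcomp (closed_full le)) as [m [_ hmin]]; [now exists x0|].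
  destruct (closed_has_max Htot Hcomp (closed_full le)) as [M [_ hmax]]; [now exists x0|].
  destruct (@incr_from_through m M P (fun y => hmin y I) (fun y => hmax y I))
    as [l (hl & hP & hlast)].
  exists m, l. unfold tagged_partition, partition_points. rewrite map_fst_diag, last_cons, hlast.
  split; [split; [|split]|].
  - intros y. apply hmin, I.
  - now apply tags_ok_diag.
  - intros y. apply hmax, I.
  - intros x hx. destruct (hP x hx); simpl; auto.
Qed.

(* Cover the line by intervals on which f varies by less than eps/2 and collect the endpoints
   of a finite subcover: an interval (a,b] avoiding them lies in one interval of the cover. *)
Lemma osc_small_exists (f : T -> R) eps : order_continuous le f -> 0 < eps ->
  exists S, osc_small f eps S.
Proof.
  intros hf heps.
  set (J := {p : T * option T * option T | let '(x, ao, bo) := p in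
              in_interval ao bo x /\ forall y, in_interval ao bo y -> Rabs (f y - f x) < eps / 2}).
  set (U := fun (j : J) => let '(x, ao, bo) := proj1_sig j in in_interval ao bo).
  destruct (@Hcomp _ U) as [js hcov].
  - intros [[[x ao] bo] hp]. apply open_interval.
  - intros x. destruct (hf x (eps / 2)) as [V (hV & hVx & hVf)]; [lra|].
    destruct (open_has_interval hV hVx) as [ao [bo [hx hsub]]].
    assert (hp : in_interval ao bo x /\ forall y, in_interval ao bo y -> Rabs (f y - f x) < eps / 2)
      by auto.
    now exists (exist _ (x, ao, bo) hp).
  - exists (flat_map (fun j : J => let '(_, ao, bo) := proj1_sig j in
                      match ao with Some a => [a] | None => [] end ++
                      match bo with Some b => [b] | None => [] end) js).
    intros a b hfree y z hay hyb haz hzb.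
    destruct (hcov b) as [j [hj hbj]].
    destruct j as [[[x ao] bo] hp]. destruct hbj as [hba hbb]. pose proof (proj2 hp) as hosc.
    assert (hin : forall w, lt le a w -> le w b -> in_interval ao bo w).
    { intros w haw hwb. split.
      - destruct ao as [a'|]; auto. destruct (le_or_lt Htot a' a) as [h|h].
        + exact (le_lt_trans Htot h haw).
        + exfalso. apply (hfree a'); auto. apply in_flat_map. eexists; split; [exact hj|]. simpl; auto.
      - destruct bo as [b'|]; auto. exact (le_lt_trans Htot hwb hbb). }
    pose proof (hosc y (hin y hay hyb)). pose proof (hosc z (hin z haz hzb)).
    replace (f y - f z) with ((f y - f x) - (f z - f x)) by ring.
    eapply Rle_lt_trans; [apply Rabs_triang|]. rewrite Rabs_Ropp. lra.
Qed.

End Partitions.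

(** * Countable sets *)

Lemma countable_of_rel A B (D : A -> Prop) (D' : B -> Prop) (rel : A -> B -> Prop) :
  countable_set D -> (forall y, D' y -> exists d, D d /\ rel d y) ->
  (forall d y y', rel d y -> rel d y' -> D' y -> D' y' -> y = y') -> countable_set D'.
Proof.
  intros [g hg] hex huniq.
  exists (fun y => match excluded_middle_informative (exists d, D d /\ rel d y) with
          | left e => g (proj1_sig (constructive_indefinite_description _ e))
          | right _ => 0%nat end).
  intros y y' hy hy'.
  destruct (excluded_middle_informative (exists d, D d /\ rel d y)) as [e|]; [|exfalso; auto].
  destruct (excluded_middle_informative (exists d, D d /\ rel d y')) as [e'|]; [|exfalso; auto].
  destruct (constructive_indefinite_description _ e) as [d [hd hdy]].
  destruct (constructive_indefinite_description _ e') as [d' [hd' hdy']]. simpl.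
  intros hgd. pose proof (hg d d' hd hd' hgd). subst d'. eauto.
Qed.

Lemma countable_union A (S1 S2 S : A -> Prop) : countable_set S1 -> countable_set S2 ->
  (forall t, S t -> S1 t \/ S2 t) -> countable_set S.
Proof.
  intros [g1 h1] [g2 h2] hS.
  exists (fun t => if excluded_middle_informative (S1 t) then (2 * g1 t)%nat else (2 * g2 t + 1)%nat).
  intros x y hx hy.
  destruct (excluded_middle_informative (S1 x)) as [hx1|hx1];
  destruct (excluded_middle_informative (S1 y)) as [hy1|hy1]; intros e; try lia.
  - apply h1; auto. lia.
  - apply h2; [destruct (hS x hx)|destruct (hS y hy)|lia]; tauto.
Qed.

(** * The closed subset as a compact line *)

Lemma proj1_sig_inj A (P : A -> Prop) (x y : {a | P a}) : proj1_sig x = proj1_sig y -> x = y.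
Proof. apply eq_sig_hprop. intros. apply proof_irrelevance. Qed.

Section SubspaceNbhds.
Variables (T : Type) (le : T -> T -> Prop) (L : T -> Prop).
Hypotheses (Htot : total_order le) (Hcomp : order_compact le) (HL : order_closed le L).

Local Notation Ls := {x : T | L x}.
Local Notation leL := (induced le L).
Local Notation "` x" := (proj1_sig x) (at level 5).

Lemma induced_total : total_order leL.
Proof.
  unfold induced. split; [|split; [|split]].
  - intros x. apply (le_refl Htot).
  - intros x y hxy hyx. apply proj1_sig_inj, (le_antisym Htot); auto.
  - intros x y z. apply (le_trans Htot).
  - intros x y. apply (le_total Htot).
Qed.

Lemma lt_induced (x y : Ls) : lt leL x y <-> lt le (` x) (` y).
Proof.
  unfold lt, induced. split; intros [h hne]; split; auto.
  - intros e. apply hne, proj1_sig_inj, e.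
  - intros e. apply hne. now rewrite e.
Qed.

(* When L meets (-oo, a], the L-neighbourhood of x starts at max (L ∩ (-oo, a]). *)
Lemma trace_left_nbhd U (x : Ls) : order_open le U -> U (` x) ->
  left_nbhd leL (fun y : Ls => U (` y)) x.
Proof.
  intros hU hx. destruct (hU _ hx) as [[hl|[a [hax hA]]] _]; [left; intros y; apply hl|].
  destruct (classic (exists l : Ls, le (` l) a)) as [[l0 hl0]|hnone].
  - destruct (closed_has_max Htot Hcomp (C := fun t => L t /\ le t a)) as [m [[hmL hma] hmax]].
    + apply closed_and, closed_le; auto.
    + exists (` l0). split; auto. exact (proj2_sig l0).
    + right. exists (exist _ m hmL). split; [apply lt_induced; exact (le_lt_trans Htot hma hax)|].
      intros y hmy hyx. apply lt_induced in hmy. apply hA; [|exact hyx].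
      destruct (le_or_lt Htot (` y) a) as [hya|]; auto.
      exfalso. apply (lt_nle Htot hmy), hmax. split; auto. exact (proj2_sig y).
  - destruct (classic (is_least leL x)) as [|hnl]; [now left|right].
    destruct (not_least_lt induced_total hnl) as [l hlx]. exists l. split; auto.
    intros y _ hyx. apply hA; auto. apply (nle_lt Htot). intros hya. eauto.
Qed.

Lemma lift_left_nbhd U (x : Ls) : U x -> left_nbhd leL U x ->
  exists W, order_open le W /\ W (` x) /\ forall y : Ls, W (` y) -> le (` y) (` x) -> U y.
Proof.
  intros hx [hl|[a [hax hA]]].
  - exists (fun _ => True). split; [apply open_full; auto|split; auto].
    intros y _ hyx. replace y with x; auto. apply proj1_sig_inj, (le_antisym Htot); auto. apply hl.
  - exists (lt le (` a)). split; [apply open_gt; auto|split; [now apply lt_induced|]].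
    intros y hay hyx. apply hA; auto. now apply lt_induced.
Qed.

End SubspaceNbhds.

Section SubspaceTopology.
Variables (T : Type) (le : T -> T -> Prop) (L : T -> Prop).
Hypotheses (Htot : total_order le) (Hcomp : order_compact le) (HL : order_closed le L).

Local Notation Ls := {x : T | L x}.
Local Notation leL := (induced le L).
Local Notation "` x" := (proj1_sig x) (at level 5).

(* Right halves of neighbourhoods are left halves for the reversed order, and
   [dual (induced le L)] is convertible to [induced (dual le) L]. *)
Let Htot' : total_order (dual le) := total_order_dual Htot.
Let Hcomp' : order_compact (dual le) := order_compact_dual Hcomp.
Let HL' : order_closed (dual le) L := order_closed_dual HL.

Lemma trace_open U : order_open le U -> order_open leL (fun y : Ls => U (` y)).
Proof.
  intros hU. apply order_open_nbhds. intros x hx. split.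
  - exact (trace_left_nbhd Htot Hcomp HL hU hx).
  - exact (trace_left_nbhd Htot' Hcomp' HL' (order_open_dual hU) hx).
Qed.

Lemma lift_open U (x : Ls) : order_open leL U -> U x ->
  exists W, order_open le W /\ W (` x) /\ forall y : Ls, W (` y) -> U y.
Proof.
  rewrite order_open_nbhds. intros hU hx. destruct (hU x hx) as [hl hr].
  destruct (lift_left_nbhd Htot hx hl) as [W1 (hW1 & hxW1 & hW1U)].
  destruct (lift_left_nbhd Htot' hx hr) as [W2 (hW2 & hxW2 & hW2U)].
  exists (fun t => W1 t /\ W2 t). split; [exact (open_and Htot hW1 (order_open_dual hW2))|split; auto].
  intros y [hy1 hy2]. destruct (le_total Htot (` y) (` x)); auto.
Qed.

Lemma induced_compact : order_compact leL.
Proof.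
  intros J U hU hcov.
  set (V := fun (o : option J) t => match o with
       | Some j => exists W, order_open le W /\ W t /\ forall y : Ls, W (` y) -> U j y
       | None => ~ L t end).
  destruct (@Hcomp _ V) as [os hos].
  - intros [j|]; [|exact HL]. apply open_union.
    intros t [W (hW & hWt & hWU)]. exists W. split; auto. split; auto. intros s hs. now exists W.
  - intros t. destruct (classic (L t)) as [ht|ht].
    + destruct (hcov (exist _ t ht)) as [j hj]. exists (Some j). exact (lift_open (hU j) hj).
    + now exists None.
  - exists (flat_map (fun o => match o with Some j => [j] | None => [] end) os).
    intros x. destruct (hos (` x)) as [[j|] [hin hv]].
    + exists j. split; [apply in_flat_map; exists (Some j); simpl; auto|].
      destruct hv as [W (_ & hWx & hWU)]. auto.
    + exfalso. apply hv, proj2_sig.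
Qed.

Lemma induced_compact_line : compact_line leL.
Proof. split; [apply induced_total, Htot|exact induced_compact]. Qed.

Lemma order_continuous_trace (f : T -> R) :
  order_continuous le f -> order_continuous leL (fun x : Ls => f (` x)).
Proof.
  intros hf x eps heps. destruct (hf (` x) eps heps) as [U (hU & hxU & hUf)].
  exists (fun y : Ls => U (` y)). split; [exact (trace_open hU)|auto].
Qed.

End SubspaceTopology.

(** * Distribution functions extended from L to K *)

Section ClosedSubset.
Variables (T : Type) (le : T -> T -> Prop) (L : T -> Prop).
Hypotheses (Htot : total_order le) (Hcomp : order_compact le) (HL : order_closed le L).

Local Notation Ls := {x : T | L x}.
Local Notation leL := (induced le L).
Local Notation "` x" := (proj1_sig x) (at level 5).

Definition max_below (t : T) (p : Ls) : Prop :=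
  le (` p) t /\ forall l : Ls, le (` l) t -> le (` l) (` p).

Definition proj_below (t : T) : option Ls :=
  match excluded_middle_informative (exists p, max_below t p) with
  | left e => Some (proj1_sig (constructive_indefinite_description _ e))
  | right _ => None
  end.

Lemma proj_below_spec t p : proj_below t = Some p -> max_below t p.
Proof.
  unfold proj_below. destruct (excluded_middle_informative _) as [e|]; [|discriminate].
  intros h. injection h as <-. exact (proj2_sig (constructive_indefinite_description _ e)).
Qed.

Lemma max_below_exists t (l : Ls) : le (` l) t -> exists p, max_below t p.
Proof.
  intros hl.
  destruct (closed_has_max Htot Hcomp (C := fun u => L u /\ le u t)) as [m [[hmL hmt] hmax]].
  - apply closed_and, closed_le; auto.
  - exists (` l). split; auto. exact (proj2_sig l).
  - exists (exist _ m hmL). split; auto. intros l' hl'. apply hmax. split; auto. exact (proj2_sig l').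
Qed.

Lemma proj_below_eq t p : max_below t p -> proj_below t = Some p.
Proof.
  intros [hpt hp]. unfold proj_below. destruct (excluded_middle_informative _) as [e|e].
  - destruct (constructive_indefinite_description _ e) as [q [hqt hq]]. simpl.
    f_equal. apply proj1_sig_inj, (le_antisym Htot); auto.
  - exfalso. apply e. now exists p.
Qed.

Lemma proj_below_None t : proj_below t = None -> forall l : Ls, ~ le (` l) t.
Proof.
  intros h l hl. destruct (max_below_exists hl) as [p hp].
  rewrite (proj_below_eq hp) in h. discriminate.
Qed.

Lemma proj_below_in (x : Ls) : proj_below (` x) = Some x.
Proof. apply proj_below_eq. split; [apply (le_refl Htot)|auto]. Qed.

Lemma proj_below_mono s t q : proj_below s = Some q -> le s t ->
  exists p, proj_below t = Some p /\ le (` q) (` p).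
Proof.
  intros hs hst. destruct (proj_below_spec hs) as [hqs _].
  assert (hqt : le (` q) t) by exact (le_trans Htot hqs hst).
  destruct (max_below_exists hqt) as [p hp].
  exists p. split; [exact (proj_below_eq hp)|]. apply hp, hqt.
Qed.

Lemma proj_below_gap t y : le t y -> (forall l : Ls, le (` l) y -> le (` l) t) ->
  proj_below y = proj_below t.
Proof.
  intros hty hgap. destruct (proj_below t) as [p|] eqn:hp.
  - destruct (proj_below_spec hp) as [hpt hmax].
    apply proj_below_eq. split; [exact (le_trans Htot hpt hty)|]. auto.
  - destruct (proj_below y) as [q|] eqn:hq; auto. exfalso.
    destruct (proj_below_spec hq) as [hqy _]. exact (proj_below_None hp (hgap q hqy)).
Qed.

(* The distribution function on K of the measure on L with distribution function F. *)
Definition extend (F : Ls -> R) (t : T) : R :=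
  match proj_below t with Some p => F p | None => 0 end.

Lemma extend_in F (x : Ls) : extend F (` x) = F x.
Proof. unfold extend. now rewrite proj_below_in. Qed.

Lemma extend_right_continuous F : right_continuous leL F -> right_continuous le (extend F).
Proof.
  intros hF t eps heps. destruct (classic (is_greatest le t)) as [|hng]; [now left|right].
  assert (hconst : forall y, le t y -> (forall l : Ls, le (` l) y -> le (` l) t) ->
                   Rabs (extend F y - extend F t) < eps).
  { intros y hty hgap. unfold extend. rewrite (proj_below_gap hty hgap).
    now rewrite Rminus_diag, Rabs_R0. }
  destruct (classic (L t)) as [ht|ht].
  - set (x := exist _ t ht : Ls).
    assert (hx : proj_below t = Some x) by exact (proj_below_in x).
    destruct (hF x eps heps) as [hgx|[b [hxb hb]]].
    + destruct (not_greatest_lt Htot hng) as [b hb]. exists b. split; auto.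
      intros y hty _. apply hconst; auto. intros l _. apply (hgx l).
    + exists (` b). split; [now apply lt_induced in hxb|]. intros y hty hyb.
      destruct (proj_below_mono hx hty) as [p [hp hxp]].
      unfold extend. rewrite hp, hx. apply hb; auto.
      apply lt_induced. exact (le_lt_trans Htot (proj1 (proj_below_spec hp)) hyb).
  - destruct (HL ht) as [_ [|[b [htb hb]]]]; [contradiction|].
    exists b. split; auto. intros y hty hyb. apply hconst; auto.
    intros l hly. destruct (le_or_lt Htot (` l) t) as [|htl]; auto.
    exfalso. exact (hb (` l) (lt_le_incl htl) (le_lt_trans Htot hly hyb) (proj2_sig l)).
Qed.

(* [q] is the last projection listed so far; repeated projections are skipped. *)
Fixpoint proj_chain (q : Ls) (l : list T) : list Ls :=
  match l with
  | [] => []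
  | t :: r => match proj_below t with
      | Some p => if excluded_middle_informative (p = q) then proj_chain q r else p :: proj_chain p r
      | None => proj_chain q r
      end
  end.

Lemma proj_chain_incr l : forall prev q, incr_from le prev l -> proj_below prev = Some q ->
  incr_from leL q (proj_chain q l).
Proof.
  induction l as [|t r IH]; intros prev q hi hq; simpl; auto. destruct hi as [hlt hr].
  destruct (proj_below_mono hq (lt_le_incl hlt)) as [p [hp hqp]]. rewrite hp.
  destruct (excluded_middle_informative (p = q)) as [->|hne]; [now apply (IH t)|].
  split; [|now apply (IH t)].
  apply lt_induced. split; auto. intros e. apply hne, proj1_sig_inj. auto.
Qed.

Lemma variation_extend F l : forall prev q, incr_from le prev l -> proj_below prev = Some q ->
  variation_from (extend F) prev l = variation_from F q (proj_chain q l).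
Proof.
  induction l as [|t r IH]; intros prev q hi hq; simpl; auto. destruct hi as [hlt hr].
  destruct (proj_below_mono hq (lt_le_incl hlt)) as [p [hp _]].
  unfold extend at 1 2. rewrite hp, hq.
  destruct (excluded_middle_informative (p = q)) as [->|]; simpl.
  - rewrite Rminus_diag, Rabs_R0, Rplus_0_l. now apply (IH t).
  - f_equal. now apply (IH t).
Qed.

Lemma proj_chain_in l : forall prev q, incr_from le prev l -> proj_below prev = Some q ->
  forall t, In t l -> forall p, proj_below t = Some p -> In p (q :: proj_chain q l).
Proof.
  induction l as [|t r IH]; intros prev q hi hq u hu p hp; [destruct hu|]. destruct hi as [hlt hr].
  destruct (proj_below_mono hq (lt_le_incl hlt)) as [p' [hp' _]]. simpl. rewrite hp'.
  destruct hu as [<-|hu].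
  - rewrite hp in hp'. injection hp' as <-.
    destruct (excluded_middle_informative (p = q)); simpl; auto.
  - specialize (IH t _ hr hp' u hu p hp).
    destruct (excluded_middle_informative (p' = q)) as [->|]; simpl in *; tauto.
Qed.

Lemma proj_chain_last l : forall prev q, incr_from le prev l -> proj_below prev = Some q ->
  forall p, proj_below (last l prev) = Some p -> last (proj_chain q l) q = p.
Proof.
  induction l as [|t r IH]; intros prev q hi hq p hp; [simpl in *; congruence|].
  destruct hi as [hlt hr]. rewrite last_cons in hp.
  destruct (proj_below_mono hq (lt_le_incl hlt)) as [p' [hp' _]]. simpl. rewrite hp'.
  destruct (excluded_middle_informative (p' = q)) as [->|]; [|rewrite last_cons]; now apply (IH t).
Qed.

Lemma induced_has_least : (exists x : Ls, True) -> exists mL : Ls, is_least leL mL.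
Proof.
  intros [x0 _]. destruct (closed_has_min Htot Hcomp HL) as [m [hmL hmin]].
  - exists (` x0). exact (proj2_sig x0).
  - exists (exist _ m hmL). intros y. apply hmin, proj2_sig.
Qed.

(* Before the first point of L the extension vanishes, so the only extra variation
   is the jump onto L. *)
Lemma variation_extend_None F M (mL : Ls) : is_least leL mL ->
  (forall t0 l, incr_from leL t0 l -> variation_from F t0 l <= M) ->
  forall l prev, incr_from le prev l -> proj_below prev = None ->
  variation_from (extend F) prev l <= Rabs (F mL) + M.
Proof.
  intros hm hM. assert (M0 : 0 <= M) by exact (hM mL [] I).
  induction l as [|t r IH]; intros prev hi hprev; simpl.
  { pose proof (Rabs_pos (F mL)). lra. }
  destruct hi as [hlt hr]. unfold extend at 2. rewrite hprev, Rminus_0_r.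
  destruct (proj_below t) as [p|] eqn:ht.
  - unfold extend at 1. rewrite ht, (variation_extend F hr ht).
    destruct (classic (p = mL)) as [->|hne].
    + pose proof (hM mL _ (proj_chain_incr hr ht)). lra.
    + assert (hchain : incr_from leL mL (p :: proj_chain p r)).
      { split; [split; [apply hm|auto]|exact (proj_chain_incr hr ht)]. }
      pose proof (hM mL _ hchain) as hv. simpl in hv.
      replace (F p) with (F mL + (F p - F mL)) by ring.
      pose proof (Rabs_triang (F mL) (F p - F mL)). lra.
  - unfold extend at 1. rewrite ht, Rabs_R0, Rplus_0_l. now apply (IH t).
Qed.

Lemma extend_bounded_variation F : bounded_variation leL F -> bounded_variation le (extend F).
Proof.
  intros [M hM]. destruct (classic (exists x : Ls, True)) as [hne|hempty].
  - destruct (induced_has_least hne) as [mL hleast].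
    exists (Rabs (F mL) + M). intros t0 l hi. destruct (proj_below t0) as [q|] eqn:hq.
    + rewrite (variation_extend F hi hq). pose proof (hM q _ (proj_chain_incr hi hq)).
      pose proof (Rabs_pos (F mL)). lra.
    + exact (variation_extend_None hleast hM hi hq).
  - exists 0. assert (hzero : forall t, extend F t = 0).
    { intros t. unfold extend. destruct (proj_below t); [exfalso; eauto|auto]. }
    intros t0 l _. revert t0. induction l as [|t r IH]; intros t0; simpl; [lra|].
    rewrite !hzero, Rminus_diag, Rabs_R0. specialize (IH t). lra.
Qed.

Lemma extend_NBV F : NBV leL F -> NBV le (extend F).
Proof.
  intros [hrc hbv]. split; [apply extend_right_continuous|apply extend_bounded_variation]; auto.
Qed.

Section RiemannStieltjes.
Variables (f : T -> R) (F : Ls -> R) (eps : R) (S : list T).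
Hypothesis Hosc : osc_small le f eps S.

Local Notation fL := (fun x : Ls => f (` x)).

(* A cell (prev, t] of the K-partition contributes only if the projection jumps from q to p
   inside it; it then matches the L-term at p, and f varies by less than eps on the cell. *)
Lemma rs_tail_extend_Some l : forall prev q, tags_ok le prev l -> proj_below prev = Some q ->
  (forall s, In s S -> le s prev \/ In s (map fst l)) ->
  Rabs (rs_tail f (extend F) prev l - rs_tail fL F q (diag (proj_chain q (map fst l))))
    <= eps * variation_from F q (proj_chain q (map fst l)).
Proof.
  induction l as [|[t tau] r IH]; intros prev q hl hq hS.
  { simpl. rewrite Rminus_diag, Rabs_R0, Rmult_0_r. lra. }
  destruct hl as (hlt & htau & htaut & hr).
  destruct (proj_below_mono hq (lt_le_incl hlt)) as [p [hp hqp]].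
  simpl. rewrite hp. unfold extend at 1 2. rewrite hp, hq.
  pose proof (points_after_step Htot hlt hS) as hS'.
  destruct (excluded_middle_informative (p = q)) as [->|hne].
  - rewrite Rminus_diag, Rmult_0_r, Rplus_0_l. now apply (IH t).
  - simpl. apply Rabs_mul_add_sub_le; [|now apply (IH t)].
    apply (Hosc (tags_cell_free Htot hr hlt hS)); auto.
    + destruct (le_or_lt Htot (` p) prev) as [hpprev|]; auto. exfalso. apply hne.
      apply proj1_sig_inj, (le_antisym Htot); auto. apply (proj_below_spec hq), hpprev.
    + apply (proj_below_spec hp).
Qed.

Lemma rs_tail_extend_None (mL : Ls) : is_least leL mL ->
  forall l prev, tags_ok le prev l -> proj_below prev = None -> In (` mL) (map fst l) ->
  (forall s, In s S -> le s prev \/ In s (map fst l)) ->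
  Rabs (rs_tail f (extend F) prev l -
        (f (` mL) * F mL + rs_tail fL F mL (diag (proj_chain mL (map fst l)))))
    <= eps * (Rabs (F mL) + variation_from F mL (proj_chain mL (map fst l))).
Proof.
  intros hm. induction l as [|[t tau] r IH]; intros prev hl hprev hin hS; [destruct hin|].
  destruct hl as (hlt & htau & htaut & hr). pose proof (points_after_step Htot hlt hS) as hS'.
  simpl. unfold extend at 2. rewrite hprev. destruct (proj_below t) as [p|] eqn:hp.
  - assert (ht : t = ` mL).
    { destruct hin as [|hin]; auto. exfalso. destruct (proj_below_spec hp) as [hpt _].
      apply (lt_nle Htot (tags_ok_gt Htot hr hin)). exact (le_trans Htot (hm p) hpt). }
    subst t. rewrite proj_below_in in hp. injection hp as <-.
    destruct (excluded_middle_informative (mL = mL)) as [_|]; [|tauto].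
    unfold extend at 1. rewrite proj_below_in, Rminus_0_r.
    apply Rabs_mul_add_sub_le.
    + apply (Hosc (tags_cell_free Htot hr hlt hS)); auto; apply (le_refl Htot).
    + exact (rs_tail_extend_Some hr (proj_below_in mL) hS').
  - assert (hin' : In (` mL) (map fst r)).
    { destruct hin as [ht|]; auto. simpl in ht. subst t. now rewrite proj_below_in in hp. }
    unfold extend at 1. rewrite hp, Rminus_diag, Rmult_0_r, Rplus_0_l. now apply (IH t).
Qed.

End RiemannStieltjes.

Lemma proj_chain_from_min (mL : Ls) : is_least leL mL ->
  forall l prev, incr_from le prev l -> proj_below prev = None -> In (` mL) l ->
  exists l', incr_from le (` mL) l' /\ proj_chain mL l = proj_chain mL l' /\
    (forall t, In t l -> proj_below t = None \/ t = ` mL \/ In t l') /\ last l prev = last l' (` mL).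
Proof.
  intros hm. induction l as [|t r IH]; intros prev hi hprev hin; [destruct hin|].
  destruct hi as [hlt hr]. destruct (proj_below t) as [p|] eqn:hp.
  - assert (ht : t = ` mL).
    { destruct hin as [|hin]; auto. exfalso. destruct (proj_below_spec hp) as [hpt _].
      apply (lt_nle Htot (incr_from_gt Htot hr hin)). exact (le_trans Htot (hm p) hpt). }
    subst t. rewrite proj_below_in in hp. injection hp as <-.
    exists r. rewrite last_cons. split; auto. split; [|split; [intros u [<-|hu]|]; auto].
    simpl. rewrite proj_below_in. destruct (excluded_middle_informative (mL = mL)); tauto.
  - assert (hin' : In (` mL) r).
    { destruct hin as [ht|]; auto. subst t. now rewrite proj_below_in in hp. }
    destruct (IH t hr hp hin') as [l' (h1 & h2 & h3 & h4)].
    exists l'. rewrite last_cons. simpl. rewrite hp. split; auto. split; auto. split; auto.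
    intros u [<-|hu]; auto.
Qed.

Lemma chain_partition (mL : Ls) prev l : is_least leL mL ->
  incr_from le prev l -> proj_below prev = Some mL -> is_greatest le (last l prev) ->
  tagged_partition leL mL (diag (proj_chain mL l)) /\
  forall x : Ls, In (` x) (prev :: l) -> In x (partition_points mL (diag (proj_chain mL l))).
Proof.
  intros hm hi hprev hgreat. unfold tagged_partition, partition_points.
  rewrite map_fst_diag, last_cons. split; [split; [exact hm|split]|].
  - apply (tags_ok_diag (induced_total L Htot)). exact (proj_chain_incr hi hprev).
  - destruct (max_below_exists (l := mL) (hgreat (` mL))) as [p hp].
    rewrite (proj_chain_last hi hprev (proj_below_eq hp)). intros y. apply hp, hgreat.
  - intros x [hx|hx].
    + rewrite hx, proj_below_in in hprev. injection hprev as ->. now left.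
    + exact (proj_chain_in hi hprev hx (proj_below_in x)).
Qed.

Lemma projected_partition (mL : Ls) t1 l1 : is_least leL mL ->
  tagged_partition le t1 l1 -> In (` mL) (partition_points t1 l1) ->
  tagged_partition leL mL (diag (proj_chain mL (map fst l1))) /\
  forall x : Ls, In (` x) (partition_points t1 l1) ->
    In x (partition_points mL (diag (proj_chain mL (map fst l1)))).
Proof.
  intros hm (ht1 & htags & hlast) hmin. unfold partition_points in hmin |- *.
  rewrite last_cons in hlast. pose proof (tags_ok_incr htags) as hi.
  destruct (proj_below t1) as [q|] eqn:hq.
  - assert (q = mL) as ->.
    { destruct (proj_below_spec hq) as [hqt _].
      apply proj1_sig_inj, (le_antisym Htot); [exact (le_trans Htot hqt (ht1 _))|apply hm]. }
    exact (chain_partition hm hi hq hlast).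
  - assert (hin : In (` mL) (map fst l1)).
    { destruct hmin as [e|]; auto. rewrite e, proj_below_in in hq. discriminate. }
    destruct (proj_chain_from_min hm hi hq hin) as [l' (h1 & h2 & h3 & h4)].
    rewrite h2. rewrite h4 in hlast.
    destruct (chain_partition hm h1 (proj_below_in mL) hlast) as [hP hpts].
    split; auto. intros x [e|hx].
    + rewrite e, proj_below_in in hq. discriminate.
    + apply hpts. destruct (h3 _ hx) as [e|[e|]]; simpl; auto.
      rewrite proj_below_in in e. discriminate.
Qed.

Lemma rs_sum_extend_close f F eps S (mL : Ls) t1 l1 : 0 <= eps -> osc_small le f eps S ->
  is_least leL mL -> tagged_partition le t1 l1 -> In (` mL) (partition_points t1 l1) ->
  (forall s, In s S -> In s (partition_points t1 l1)) ->
  Rabs (rs_sum f (extend F) t1 l1 -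
        rs_sum (fun x : Ls => f (` x)) F mL (diag (proj_chain mL (map fst l1))))
    <= eps * (Rabs (F mL) + variation_from F mL (proj_chain mL (map fst l1))).
Proof.
  intros heps hosc hm (ht1 & htags & _) hmin hS. unfold rs_sum.
  assert (hS' : forall s, In s S -> le s t1 \/ In s (map fst l1)).
  { intros s hs. destruct (hS s hs) as [<-|]; [left; apply ht1|now right]. }
  destruct (proj_below t1) as [q|] eqn:hq.
  - destruct (proj_below_spec hq) as [hqt _].
    assert (ht1q : t1 = ` q) by (apply (le_antisym Htot); auto).
    assert (q = mL) as ->.
    { apply proj1_sig_inj, (le_antisym Htot); [rewrite <- ht1q; apply ht1|apply hm]. }
    unfold extend at 1. rewrite hq, <- ht1q.
    replace (f t1 * F mL + rs_tail f (extend F) t1 l1 -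
             (f t1 * F mL + rs_tail (fun x : Ls => f (` x)) F mL (diag (proj_chain mL (map fst l1)))))
      with (rs_tail f (extend F) t1 l1 -
            rs_tail (fun x : Ls => f (` x)) F mL (diag (proj_chain mL (map fst l1)))) by ring.
    eapply Rle_trans; [exact (rs_tail_extend_Some F hosc htags hq hS')|].
    pose proof (Rabs_pos (F mL)). apply Rmult_le_compat_l; lra.
  - assert (hin : In (` mL) (map fst l1)).
    { destruct hmin as [e|]; auto. rewrite e, proj_below_in in hq. discriminate. }
    unfold extend at 1. rewrite hq, Rmult_0_r, Rplus_0_l.
    exact (rs_tail_extend_None F hosc hm htags hq hin hS').
Qed.

Lemma integral_extend f F v : order_continuous le f -> bounded_variation leL F ->
  (exists x : Ls, True) ->
  is_rs_integral leL (fun x : Ls => f (` x)) F v -> is_rs_integral le f (extend F) v.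
Proof.
  intros hf [M hM] hne hI eps heps.
  destruct (induced_has_least hne) as [mL hm].
  assert (M0 : 0 <= M) by exact (hM mL [] I).
  pose proof (Rabs_pos (F mL)).
  set (eps' := eps / (2 * (Rabs (F mL) + M + 1))).
  assert (heps' : 0 < eps') by (apply Rdiv_lt_0_compat; lra).
  assert (hsmall : eps' * (Rabs (F mL) + M) < eps / 2).
  { assert (eps' * (Rabs (F mL) + M + 1) = eps / 2) by (unfold eps'; field; lra).
    assert (eps' * (Rabs (F mL) + M) < eps' * (Rabs (F mL) + M + 1))
      by (apply Rmult_lt_compat_l; lra).
    lra. }
  destruct (osc_small_exists Htot Hcomp hf heps') as [S hS].
  destruct (hI (eps / 2)) as [s0 [l0 [hP0 hR0]]]; [lra|].
  set (P := S ++ ` mL :: map (fun x : Ls => ` x) (partition_points s0 l0)).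
  destruct (tagged_partition_through Htot Hcomp P (` mL)) as [t0 [l [hP hthrough]]].
  exists t0, (diag l). split; [exact hP|]. intros t1 l1 hP1 href.
  assert (hpts : forall y, In y P -> In y (partition_points t1 l1)) by auto.
  assert (hmin : In (` mL) (partition_points t1 l1)).
  { apply hpts, in_or_app. right. now left. }
  set (Dl := proj_chain mL (map fst l1)).
  destruct (projected_partition hm hP1 hmin) as [hPL hPLpts].
  assert (hclose : Rabs (rs_sum (fun x : Ls => f (` x)) F mL (diag Dl) - v) < eps / 2).
  { apply hR0; [exact hPL|]. intros x hx. apply hPLpts, hpts, in_or_app. right. right.
    now apply in_map. }
  assert (hvar : variation_from F mL Dl <= M).
  { apply hM. destruct hPL as (_ & htags & _). rewrite <- (map_fst_diag Dl).
    exact (tags_ok_incr htags). }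
  assert (hdiff := rs_sum_extend_close F (Rlt_le _ _ heps') hS hm hP1 hmin
                     (fun s hs => hpts s (in_or_app _ _ _ (or_introl hs)))).
  fold Dl in hdiff.
  assert (eps' * (Rabs (F mL) + variation_from F mL Dl) <= eps' * (Rabs (F mL) + M))
    by (apply Rmult_le_compat_l; lra).
  replace (rs_sum f (extend F) t1 l1 - v) with
    ((rs_sum f (extend F) t1 l1 - rs_sum (fun x : Ls => f (` x)) F mL (diag Dl)) +
     (rs_sum (fun x : Ls => f (` x)) F mL (diag Dl) - v)) by ring.
  eapply Rle_lt_trans; [apply Rabs_triang|lra].
Qed.

Lemma weak_star_null_extend I (F : I -> Ls -> R) : (forall i, NBV leL (F i)) ->
  weak_star_null leL F -> (exists x : Ls, True) -> weak_star_null le (fun i => extend (F i)).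
Proof.
  intros hN hW hne f hf. destruct (hW _ (order_continuous_trace Htot Hcomp HL hf)) as [a [ha hc]].
  exists a. split; auto. intros i. apply integral_extend; auto. apply (hN i).
Qed.

(** * Exceptional points *)

Section ExceptionalPoints.
Variables (H D : T -> Prop).
Hypotheses (hHclosed : order_closed le H) (hDcount : countable_set D)
  (hHD : forall x, H x -> order_closure le D x).

Definition gap_witness (t d : T) : Prop :=
  D d /\ lt le t d /\ forall l : Ls, lt le t (` l) -> ~ le (` l) d.

Lemma gap_witness_exists t : H t -> ~ right_isolated_in le H t -> right_isolated_in le L t ->
  exists d, gap_witness t d.
Proof.
  intros ht hri [_ [hmax|[s (hs & hts & hgap)]]].
  - assert (habove : exists h, H h /\ lt le t h).
    { apply NNPP. intros hn. apply hri. split; auto. left. intros y hy.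
      destruct (le_or_lt Htot y t) as [|hty]; auto. exfalso. eauto. }
    destruct habove as [h [hh hth]].
    destruct (hHD hh (open_gt Htot (a := t)) hth) as [d [hd htd]].
    exists d. split; auto. split; auto. intros l htl _. exact (lt_nle Htot htl (hmax _ (proj2_sig l))).
  - destruct (not_right_isolated_between Htot Hcomp hHclosed ht hri hts) as [h (hh & hth & hhs)].
    destruct (hHD hh (open_and Htot (open_gt Htot (a := t)) (open_lt Htot (b := s))) (conj hth hhs))
      as [d [hd [htd hds]]].
    exists d. split; auto. split; auto. intros l htl hld. apply hgap. exists (` l).
    split; [exact (proj2_sig l)|]. split; auto. exact (le_lt_trans Htot hld hds).
Qed.

Lemma gap_witness_inj d t t' : gap_witness t d -> gap_witness t' d -> L t -> L t' -> t = t'.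
Proof.
  intros [_ [htd hgap]] [_ [ht'd hgap']] ht ht'.
  destruct (le_or_lt Htot t t') as [htt'|ht't].
  - destruct (classic (t = t')) as [|hne]; auto. exfalso.
    exact (hgap (exist _ t' ht') (conj htt' hne) (lt_le_incl ht'd)).
  - exfalso. exact (hgap' (exist _ t ht) ht't (lt_le_incl htd)).
Qed.

Definition first_after_D (y : Ls) : Prop :=
  exists d, D d /\ le d (` y) /\ forall l : Ls, le d (` l) -> le (` y) (` l).

Definition H_L : Ls -> Prop := order_closure leL first_after_D.

Lemma H_L_separable : separable_set leL H_L.
Proof.
  exists first_after_D. split; [intros x hx U _ hU; eauto|split; [|auto]].
  apply (countable_of_rel (D := D)
           (rel := fun d y => le d (` y) /\ forall l : Ls, le d (` l) -> le (` y) (` l)));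
    [exact hDcount| |].
  - intros y [d (hd & hdy & hy)]. eauto.
  - intros d y y' [hdy hy] [hdy' hy'] _ _. apply proj1_sig_inj, (le_antisym Htot); auto.
Qed.

(* Between x and a later point of L there is a point of H, hence of D, and the first
   point of L after that point of D lies in first_after_D. *)
Lemma first_after_D_between (x : Ls) : H (` x) -> ~ right_isolated_in le H (` x) ->
  ~ right_isolated_in le L (` x) -> forall s : Ls, lt le (` x) (` s) ->
  exists y, first_after_D y /\ lt le (` x) (` y) /\ lt le (` y) (` s).
Proof.
  intros hx hri hriL s hxs.
  assert (hu : exists u, L u /\ lt le (` x) u /\ lt le u (` s)).
  { apply NNPP. intros hn. apply hriL. split; [exact (proj2_sig x)|].
    right. exists (` s). split; [exact (proj2_sig s)|auto]. }
  destruct hu as [u (hu & hxu & hus)].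
  destruct (not_right_isolated_between Htot Hcomp hHclosed hx hri hxu) as [h (hh & hxh & hhu)].
  destruct (hHD hh (open_and Htot (open_gt Htot (a := ` x)) (open_lt Htot (b := u))) (conj hxh hhu))
    as [d [hd [hxd hdu]]].
  destruct (closed_has_min Htot Hcomp (C := fun y => L y /\ le d y)) as [m [[hm hdm] hmin]].
  - apply closed_and, closed_ge; auto.
  - exists u. split; auto. exact (lt_le_incl hdu).
  - exists (exist _ m hm). simpl. split; [|split].
    + exists d. split; auto. split; auto. intros l hl. apply hmin. split; auto. exact (proj2_sig l).
    + exact (lt_le_trans Htot hxd hdm).
    + apply (le_lt_trans Htot (y := u)); auto. apply hmin. split; auto. exact (lt_le_incl hdu).
Qed.

Lemma limit_point_in_H_L (x : Ls) : H (` x) -> ~ right_isolated_in le H (` x) ->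
  ~ right_isolated_in le L (` x) -> H_L x /\ ~ right_isolated_in leL H_L x.
Proof.
  intros hx hri hriL. pose proof (first_after_D_between hx hri hriL) as hdense.
  assert (hs0 : exists s : Ls, lt le (` x) (` s)).
  { apply NNPP. intros hn. apply hriL. split; [exact (proj2_sig x)|]. left. intros y hy.
    destruct (le_or_lt Htot y (` x)) as [|hxy]; auto. exfalso. apply hn. now exists (exist _ y hy). }
  destruct hs0 as [s0 hxs0].
  assert (hHx : H_L x).
  { intros U hU hUx. destruct (hU x hUx) as [_ [hg|[b [hxb hb]]]].
    - exfalso. exact (lt_nle Htot hxs0 (hg s0)).
    - apply lt_induced in hxb. destruct (hdense b hxb) as [y (hy & hxy & hyb)].
      exists y. split; auto. apply hb; [exact (lt_le_incl hxy)|now apply lt_induced]. }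
  split; auto. intros [_ [hmax|[s (hs & hxs & hno)]]].
  - destruct (hdense s0 hxs0) as [y (hy & hxy & _)].
    apply (lt_nle Htot hxy), (hmax y). intros U _ hU. eauto.
  - apply lt_induced in hxs. destruct (hdense s hxs) as [y (hy & hxy & hys)].
    apply hno. exists y. split; [intros U _ hU; eauto|]. split; now apply lt_induced.
Qed.

End ExceptionalPoints.

(* An exceptional point t of L is either right-isolated in L, and then the gap after t
   contains a point of D, which determines t; or it is a limit point of L, and then it is
   exceptional for the closed separable subset H_L of L. *)
Lemma exceptional_points_countable I (F : I -> Ls -> R) (Q : Ls -> Prop) :
  (forall G : Ls -> Prop, order_closed leL G -> separable_set leL G ->
     countable_set (fun x => Q x /\ G x /\ ~ right_isolated_in leL G x /\ ~ c0 (fun i => F i x))) ->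
  forall H, order_closed le H -> separable_set le H ->
  countable_set (fun t => (exists x : Ls, ` x = t /\ Q x) /\ H t /\
                          ~ right_isolated_in le H t /\ ~ c0 (fun i => extend (F i) t)).
Proof.
  intros hQ H hHclosed [D (_ & hDcount & hHD)].
  set (gaps := fun t => L t /\ exists d, gap_witness D t d).
  set (bad := fun x : Ls => Q x /\ H_L D x /\ ~ right_isolated_in leL (H_L D) x /\
                            ~ c0 (fun i => F i x)).
  assert (hgaps : countable_set gaps).
  { apply (countable_of_rel (D := D) (rel := fun d t => L t /\ gap_witness D t d)); auto.
    - intros t [ht [d hd]]. exists d. split; [apply hd|auto].
    - intros d t t' [ht hd] [ht' hd'] _ _. exact (gap_witness_inj hd hd' ht ht'). }
  assert (hbad : countable_set bad)
    by (apply hQ; [apply order_closure_closed|exact (H_L_separable hDcount)]).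
  assert (hbadK : countable_set (fun t => exists x : Ls, ` x = t /\ bad x)).
  { apply (countable_of_rel (D := bad) (rel := fun x t => ` x = t)); auto.
    - intros t [x [e hx]]. eauto.
    - intros x t t' <- <- _ _. reflexivity. }
  apply (countable_union hgaps hbadK).
  intros t [[x [<- hQx]] (hHx & hri & hnc)].
  destruct (classic (right_isolated_in le L (` x))) as [hriL|hriL].
  - left. split; [exact (proj2_sig x)|]. exact (gap_witness_exists hHclosed hHD hHx hri hriL).
  - right. exists x. split; auto. destruct (limit_point_in_H_L hHclosed hHD hHx hri hriL).
    assert (hFx : (fun i => extend (F i) (` x)) = (fun i => F i x))
      by (apply functional_extensionality; intros i; apply extend_in).
    rewrite hFx in hnc. unfold bad. tauto.
Qed.

Lemma separably_determined_induced : separably_determined le -> separably_determined leL.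
Proof.
  intros hsd I F hN hW Q hQ.
  destruct (classic (exists x : Ls, True)) as [hne|hempty].
  2:{ exists (fun _ _ => 0), (fun _ _ => 0). split; [intros i t; exfalso; eauto|].
      split; [intros t; exfalso; eauto|].
      exists 0. intros i [|x l] _ _; simpl; [lra|]. exfalso; eauto. }
  destruct (hsd I (fun i => extend (F i)) (fun i => extend_NBV (hN i))
                (weak_star_null_extend hN hW hne) _ (exceptional_points_countable hQ))
    as [a [b (hab & ha & [M hb])]].
  exists (fun i x => a i (` x)), (fun i x => b i (` x)). split; [|split].
  - intros i x hx. rewrite <- (extend_in (F i) x). apply hab. now exists x.
  - intros x hx. apply ha. now exists x.
  - exists M. intros i l hnd hl. rewrite <- sum_abs_map. apply hb.
    + apply Injective_map_NoDup; [intros x y; apply proj1_sig_inj|exact hnd].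
    + intros t ht. apply in_map_iff in ht as [x [<- hx]]. exists x. auto.
Qed.

End ClosedSubset.

Theorem proposition3p9 (T : Type) (le : T -> T -> Prop) (L : T -> Prop) :
  compact_line le -> separably_determined le -> order_closed le L ->
  compact_line (induced le L) /\ separably_determined (induced le L).
Proof.
  intros [Htot Hcomp] hsd hL. split.
  - exact (induced_compact_line Htot Hcomp hL).
  - exact (separably_determined_induced Htot Hcomp hL hsd).
Qed.
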